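(* Let $\mathbb{R}^n$ be endowed with the $\ell_1$ norm, let $A\in\mathbb{R}^{m\times n}$ have at least two different columns, and let $f:\mathbb{R}^m\to\mathbb{R}\cup\{\infty\}$ be a differentiable convex function with $\mathrm{conv}(A)\subseteq\mathrm{dom}(f)$ and $\mu^\star_{f,A}>0$. Consider any run of the Frank–Wolfe algorithm with away steps (described below), with arbitrary step sizes $\alpha_k\in[0,\alpha_{\max}]$. Then at every iteration $k$ the direction $v$ chosen satisfies \[ \langle\nabla f(u_k),v\rangle^2\ge\frac{\mu^\star_{f,A}}{2}(f(u_k)-f^\star)\qquad\text{and}\qquad\langle\nabla f(u_k),v\rangle\le f^\star-f(u_k). \]
   Context: $\Delta_{n-1}=\{x\in\mathbb{R}^n_+:\sum_ix_i=1\}$, $e_i$ standard basis vectors, $a_1,\dots,a_n$ the columns of $A$, $\mathrm{conv}(A)=\{Ax:x\in\Delta_{n-1}\}$; for $x\in\Delta_{n-1}$, $I(x)=\{i:x_i>0\}$. $f^\star=\min_{x\in\Delta_{n-1}}f(Ax)$, $Z^\star=\{z\in\Delta_{n-1}:f(Az)=f^\star\}$, and $\mu^\star_{f,A}=\inf_{x\in\Delta_{n-1}\setminus Z^\star}\frac{2(f(Ax)-f^\star)}{\mathrm{dist}(x,Z^\star)^2}$ with $\mathrm{dist}(x,Z^\star)=\min_{z\in Z^\star}\|x-z\|_1$. Algorithm (Frank–Wolfe with away steps): pick $x_0\in\Delta_{n-1}$, $u_0=Ax_0$. For $k=0,1,2,\dots$: let $j\in\operatorname{argmin}_{i=1,\dots,n}\langle\nabla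 f(u_k),a_i\rangle$ and $\ell\in\operatorname{argmax}_{i\in I(x_k)}\langle\nabla f(u_k),a_i\rangle$. If $\langle\nabla f(u_k),a_j-u_k\rangle<\langle\nabla f(u_k),u_k-a_\ell\rangle$ or $|I(x_k)|=1$ (regular step), set $v=a_j-u_k$, $w=e_j-x_k$, $\alpha_{\max}=1$; otherwise (away step) set $v=u_k-a_\ell$, $w=x_k-e_\ell$, $\alpha_{\max}=\frac{\langle e_\ell,x_k\rangle}{1-\langle e_\ell,x_k\rangle}$. Choose $\alpha_k\in[0,\alpha_{\max}]$ and set $x_{k+1}=x_k+\alpha_kw$, $u_{k+1}=u_k+\alpha_kv=Ax_{k+1}$. *)

From HB Require Import structures.
From mathcomp Require Import all_boot all_order all_algebra.
From mathcomp Require Import all_classical all_reals all_analysis.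

Set Implicit Arguments.
Unset Strict Implicit.
Unset Printing Implicit Defensive.

Import Order.TTheory GRing.Theory Num.Theory.
Import numFieldNormedType.Exports.
Local Open Scope classical_set_scope.
Local Open Scope ring_scope.

Definition simplex (R : realType) (n : nat) : set 'cV[R]_n :=
  [set x | (forall i, 0 <= x i 0) /\ \sum_i x i 0 = 1].

Definition supp (R : realType) (n : nat) (x : 'cV[R]_n) : {set 'I_n} :=
  [set i | 0 < x i 0].

Definition ebasis (R : realType) (n : nat) (i : 'I_n) : 'cV[R]_n :=
  \col_k (k == i)%:R.

Definition convcols (R : realType) (m n : nat) (A : 'M[R]_(m, n)) : set 'cV[R]_m :=
  [set A *m x | x in @simplex R n].

Definition dom (R : realType) (m : nat) (f : 'cV[R]_m -> \bar R) : set 'cV[R]_m :=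
  [set u | (f u < +oo)%E].

Definition no_minus_infty (R : realType) (m : nat) (f : 'cV[R]_m -> \bar R) : Prop :=
  forall u, f u != -oo%E.

Definition convex_ext (R : realType) (m : nat) (f : 'cV[R]_m -> \bar R) : Prop :=
  forall (x y : 'cV[R]_m) (t : R), 0 < t < 1 ->
    let z := t *: x + (1 - t) *: y in
    let s := 1 - t in
    (f z <= t%:E * f x + s%:E * f y)%E.

(* real-valued restriction (equal to f on dom f) *)
Definition Fr (R : realType) (m : nat) (f : 'cV[R]_m -> \bar R) : 'cV[R]_m -> R :=
  fun u => fine (f u).

Definition differentiable_ext (R : realType) (m : nat) (f : 'cV[R]_m -> \bar R) : Prop :=
  open (dom f) /\ forall u, dom f u -> differentiable (Fr f) u.

(* <grad f(u), w> = Df(u)[w] *)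
Definition gdot (R : realType) (m : nat) (f : 'cV[R]_m -> \bar R) (u w : 'cV[R]_m) : R :=
  'd (Fr f) u w.

(* f^* = min_{x in Delta} f(Ax) (the minimum is attained; we use the infimum) *)
Definition fstar (R : realType) (m n : nat) (f : 'cV[R]_m -> \bar R) (A : 'M[R]_(m, n)) : R :=
  inf [set Fr f (A *m x) | x in @simplex R n].

Definition Zstar (R : realType) (m n : nat) (f : 'cV[R]_m -> \bar R) (A : 'M[R]_(m, n))
  : set 'cV[R]_n :=
  [set z | @simplex R n z /\ Fr f (A *m z) = fstar f A].

Definition l1dist (R : realType) (n : nat) (x z : 'cV[R]_n) : R :=
  \sum_i `|x i 0 - z i 0|.

Definition distZ (R : realType) (m n : nat) (f : 'cV[R]_m -> \bar R) (A : 'M[R]_(m, n))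
  (x : 'cV[R]_n) : R :=
  inf [set l1dist x z | z in Zstar f A].

(* mu^*_{f,A}, an extended real (inf of the empty set is +oo) *)
Definition mustar (R : realType) (m n : nat) (f : 'cV[R]_m -> \bar R) (A : 'M[R]_(m, n))
  : \bar R :=
  ereal_inf [set ((2 * (Fr f (A *m x) - fstar f A)) / (distZ f A x) ^+ 2)%:E
            | x in @simplex R n `\` Zstar f A].

Definition regular_step (R : realType) (m n : nat) (f : 'cV[R]_m -> \bar R)
  (A : 'M[R]_(m, n)) (x : 'cV[R]_n) (j l : 'I_n) : bool :=
  let u := A *m x in
  (gdot f u (col j A - u) < gdot f u (u - col l A)) || (#|supp x| == 1)%N.

Definition fw_dir (R : realType) (m n : nat) (f : 'cV[R]_m -> \bar R)
  (A : 'M[R]_(m, n)) (x : 'cV[R]_n) (j l : 'I_n) : 'cV[R]_m :=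
  let u := A *m x in
  if regular_step f A x j l then col j A - u else u - col l A.

Definition FW_away_run (R : realType) (m n : nat) (f : 'cV[R]_m -> \bar R)
  (A : 'M[R]_(m, n)) (x : nat -> 'cV[R]_n) (j l : nat -> 'I_n) (alpha : nat -> R)
  : Prop :=
  @simplex R n (x 0%N) /\
  forall k : nat,
    let u := A *m x k in
    (forall i, gdot f u (col (j k) A) <= gdot f u (col i A)) /\
    (l k \in supp (x k)) /\
    (forall i, i \in supp (x k) -> gdot f u (col i A) <= gdot f u (col (l k) A)) /\
    (if regular_step f A (x k) (j k) (l k) then
       0 <= alpha k <= 1 /\
       x k.+1 = x k + alpha k *: (@ebasis R n (j k) - x k)
     else
       0 <= alpha k <= x k (l k) 0 / (1 - x k (l k) 0) /\
       x k.+1 = x k + alpha k *: (x k - @ebasis R n (l k))).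

From HB Require Import structures.
From mathcomp Require Import all_boot all_order all_algebra.
From mathcomp Require Import all_classical all_reals all_analysis.
From mathcomp Require Import ring lra.

(* Write u = A x, c_i = <grad f(u), a_i> and D = f(u) - f*.  By the choice of j and
   l, the chosen direction has slope g <= min(c_j - <grad f(u), u>, <grad f(u), u> - c_l).
   The first bound and convexity give the Frank-Wolfe gap estimate
   f* >= f(u) + c_j - <grad f(u), u>, hence g <= f* - f(u).  For the second, convexity
   at a minimiser z gives D <= <grad f(u), u - A z> = sum_i (x_i - z_i) c_i; as x and z
   have equal mass and x is supported where c_j <= c_i <= c_l, this is at most
   (c_l - c_j)/2 ||x - z||_1 <= -g ||x - z||_1.  So D <= -g d with d the l1 distance
   from x to Z*, and the definition of mu* gives mu* D/2 <= D^2/d^2 <= g^2. *)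

Set Implicit Arguments.
Unset Strict Implicit.
Unset Printing Implicit Defensive.

Import Order.TTheory GRing.Theory Num.Theory.
Import numFieldNormedType.Exports.
Local Open Scope classical_set_scope.
Local Open Scope ring_scope.

Lemma diff_le_of_secant_le (R : realType) m (F : 'cV[R]_m -> R) (u v : 'cV[R]_m)
    (C : R) :
  differentiable F u ->
  (forall t : R, 0 < t < 1 -> F (t *: v + u) - F u <= t * C) ->
  'd F u v <= C.
Proof.
move=> dF secant_le.
have dv := @diff_derivable _ _ _ F u v dF.
rewrite -deriveE //.
set q := fun h : R => h^-1 *: ((F \o shift u) (h *: v) - F u).
have q_cvg : q @ 0^'+ --> 'D_v F u.
  move=> P HP; have := dv P HP.
  rewrite /= /dnbhs /at_right /within /= !nbhs_simpl /=.
  by apply: filterS => y Hy /lt0r_neq0 /Hy.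
apply: (cvgr_to_le q_cvg); near=> t.
have t0 : 0 < t by near: t; exact: nbhs_right_gt.
have t1 : t < 1 by near: t; exact: nbhs_right_lt.
rewrite /q /= -[_ *: _]/(t^-1 * _) ler_pdivrMl //.
by apply: secant_le; rewrite t0 t1.
Unshelve. all: by end_near.
Qed.

Lemma ler_mul_inf (R : realType) (S : set R) (a b : R) :
  S !=set0 -> 0 <= a -> (forall s, S s -> b <= a * s) -> b <= a * inf S.
Proof.
move=> [s0 Ss0] a_ge0 le_b; move: a_ge0; rewrite le_eqVlt => /orP[/eqP a0|a_gt0].
  by have := le_b s0 Ss0; rewrite -a0 !mul0r.
rewrite -ler_pdivrMl //; apply: lb_le_inf; first by exists s0.
by move=> s Ss; rewrite ler_pdivrMl //; exact: le_b.
Qed.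

Lemma mulmx_sum_col (R : comRingType) m n (A : 'M[R]_(m, n)) (z : 'cV[R]_n) :
  A *m z = \sum_i z i 0 *: col i A.
Proof.
apply/matrixP => r k; rewrite !mxE summxE; apply: eq_bigr => i _.
by rewrite !mxE (ord1 k) mulrC.
Qed.

Lemma diff_mulmx (R : realType) m n (A : 'M[R]_(m, n)) (F : 'cV[R]_m -> R)
    (u : 'cV[R]_m) (z : 'cV[R]_n) :
  'd F u (A *m z) = \sum_i z i 0 * 'd F u (col i A).
Proof. by rewrite mulmx_sum_col linear_sum; apply: eq_bigr => i _; rewrite linearZ. Qed.

Lemma mulmx_ebasis (R : realType) m n (A : 'M[R]_(m, n)) (j : 'I_n) :
  A *m ebasis R j = col j A.
Proof.
rewrite mulmx_sum_col (bigD1 j) //= big1 ?addr0; first by rewrite mxE eqxx scale1r.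
by move=> i /negbTE ij; rewrite mxE ij scale0r.
Qed.

Section Simplex.
Variables (R : realType) (n : nat).
Implicit Types (x z : 'cV[R]_n) (i j l : 'I_n).

Lemma simplex_ebasis j : simplex (ebasis R j).
Proof.
split=> [i|]; first by rewrite mxE ler0n.
rewrite (bigD1 j) //= big1 ?addr0; first by rewrite mxE eqxx.
by move=> i /negbTE ij; rewrite mxE ij.
Qed.

Lemma simplex_convex x z (t : R) :
  simplex x -> simplex z -> 0 <= t <= 1 -> simplex (t *: z + (1 - t) *: x).
Proof.
move=> [x0 x1] [z0 z1] /andP[t0 t1]; split.
  by move=> i; rewrite !mxE; have := x0 i; have := z0 i; nra.
under eq_bigr do rewrite !mxE.
by rewrite big_split /= -!mulr_sumr x1 z1; ring.
Qed.

Lemma simplex_away_step x l (a : R) :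
  simplex x -> 0 <= a <= x l 0 / (1 - x l 0) -> simplex (x + a *: (x - ebasis R l)).
Proof.
move=> [x0 x1] /andP[a0 a1]; split.
  move=> i; rewrite !mxE; have := x0 i.
  case: eqP => [->|_]; rewrite ?mulr1n ?mulr0n; last by nra.
  move=> xl0; have [xl1|] := ltrP (x l 0) 1; last by nra.
  by move: a1; rewrite ler_pdivlMr ?subr_gt0 //; nra.
under eq_bigr do rewrite !mxE.
rewrite big_split /= -mulr_sumr sumrB x1.
have [_] := simplex_ebasis l; under eq_bigr do rewrite mxE.
by move=> ->; rewrite subrr mulr0 addr0.
Qed.

Lemma simplex_supp_card1 x l :
  simplex x -> l \in supp x -> #|supp x| = 1%N -> x = ebasis R l.
Proof.
move=> [x0 x1] l_supp /eqP/cards1P[i0 supp_eq].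
have x_off i : i != l -> x i 0 = 0.
  move=> il; have : i \notin supp x by move: l_supp; rewrite supp_eq !inE => /eqP <-.
  by rewrite inE -leNgt => xi0; apply/eqP; rewrite eq_le xi0 x0.
apply/matrixP => i k; rewrite (ord1 k) mxE.
have [->|il] := eqVneq i l; last by rewrite x_off.
by rewrite -x1 (bigD1 l) //= big1 ?addr0 // => i' /x_off.
Qed.

Lemma simplex_pairing_le_l1dist x z (c : 'I_n -> R) (cj cl : R) :
  simplex x -> simplex z -> (forall i, cj <= c i) -> (forall i, 0 < x i 0 -> c i <= cl) ->
  \sum_i (x i 0 - z i 0) * c i <= (cl - cj) / 2 * l1dist x z.
Proof.
move=> [x0 x1] [z0 z1] cj_le le_cl.
set mid := (cl + cj) / 2.
(* the total mass of x - z is zero, so c may be recentred at mid *)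
have -> : \sum_i (x i 0 - z i 0) * c i =
    \sum_i (x i 0 - z i 0) * (c i - mid) + mid * \sum_i (x i 0 - z i 0).
  by rewrite mulr_sumr -big_split /=; apply: eq_bigr => i _; ring.
rewrite sumrB x1 z1 subrr mulr0 addr0 /l1dist mulr_sumr; apply: ler_sum => i _.
have := cj_le i; have := x0 i; have := z0 i.
have [zx|] := ltrP (z i 0) (x i 0); last by rewrite /mid; nra.
by have := le_cl i (le_lt_trans (z0 i) zx); rewrite /mid; nra.
Qed.

End Simplex.

Lemma FW_away_run_simplex (R : realType) m n (A : 'M[R]_(m, n))
    (f : 'cV[R]_m -> \bar R) x j l alpha :
  FW_away_run f A x j l alpha -> forall k, simplex (x k).
Proof.
move=> [x0 step]; elim=> [//|k xk].
have [_ [_ [_]]] := step k; case: ifP => _ [a_bd ->]; last exact: simplex_away_step.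
have -> : x k + alpha k *: (ebasis R (j k) - x k)
    = alpha k *: ebasis R (j k) + (1 - alpha k) *: x k.
  by apply/matrixP => r s; rewrite !mxE; ring.
exact/simplex_convex/a_bd/simplex_ebasis.
Qed.

Section ConvexOnHull.
Variables (R : realType) (m n : nat) (A : 'M[R]_(m, n)) (f : 'cV[R]_m -> \bar R).
Hypothesis f_noninf : no_minus_infty f.
Hypothesis f_convex : convex_ext f.
Hypothesis f_diff : differentiable_ext f.
Hypothesis hull_dom : convcols A `<=` dom f.
Implicit Types (x z : 'cV[R]_n) (i j l : 'I_n).

Lemma Fr_EFin_hull x : simplex x -> f (A *m x) = (Fr f (A *m x))%:E.
Proof.
move=> sx; have /hull_dom/lt_eqF f_fin : convcols A (A *m x) by exists x.
by rewrite /Fr fineK // fin_numE f_noninf /dom f_fin.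
Qed.

Lemma gdot_le_Fr_sub x z : simplex x -> simplex z ->
  gdot f (A *m x) (A *m z - A *m x) <= Fr f (A *m z) - Fr f (A *m x).
Proof.
move=> sx sz; apply: diff_le_of_secant_le.
  by apply: f_diff.2; apply: hull_dom; exists x.
move=> t /andP[t0 t1].
have sw : simplex (t *: z + (1 - t) *: x) by apply: simplex_convex; rewrite ?ltW.
have w_eq : t *: (A *m z - A *m x) + A *m x = A *m (t *: z + (1 - t) *: x).
  rewrite mulmxDr -!scalemxAr; apply/matrixP => r k; rewrite !mxE; ring.
have := @f_convex (A *m z) (A *m x) t; rewrite t0 t1 => /(_ erefl) /=.
rewrite !scalemxAr -mulmxDr !Fr_EFin_hull // -!EFinM -EFinD lee_fin w_eq.
lra.
Qed.

Section Iterate.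
Variables (x : 'cV[R]_n) (j l : 'I_n).
Hypothesis x_simplex : simplex x.
Let u := A *m x.
Hypothesis j_min : forall i, gdot f u (col j A) <= gdot f u (col i A).

Lemma Fr_ge_FW_gap z : simplex z -> Fr f u + gdot f u (col j A - u) <= Fr f (A *m z).
Proof.
move=> sz; have := gdot_le_Fr_sub x_simplex sz; rewrite -/u.
have : gdot f u (col j A) <= gdot f u (A *m z).
  rewrite /gdot diff_mulmx -[X in X <= _]mul1r -sz.2 mulr_suml.
  by apply: ler_sum => i _; apply: ler_wpM2l; [exact: sz.1 | exact: j_min].
rewrite /gdot !linearB /=; lra.
Qed.

Lemma fstar_ge_FW_gap : Fr f u + gdot f u (col j A - u) <= fstar f A.
Proof.
apply: lb_le_inf; first by exists (Fr f u), x.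
by move=> _ [z sz <-]; exact: Fr_ge_FW_gap.
Qed.

Lemma fstar_le_Fr : fstar f A <= Fr f u.
Proof.
apply: ge_inf; last by exists x.
by exists (Fr f u + gdot f u (col j A - u)) => _ [z sz <-]; exact: Fr_ge_FW_gap.
Qed.

Hypothesis l_supp : l \in supp x.
Hypothesis l_max : forall i, i \in supp x -> gdot f u (col i A) <= gdot f u (col l A).

Lemma fw_dir_le :
  let g := gdot f u (fw_dir f A x j l) in
  g <= gdot f u (col j A - u) /\ g <= gdot f u (u - col l A).
Proof.
rewrite /fw_dir /regular_step -/u; case: ifP => [/orP[lt_dir|/eqP card1]|/negbT].
- by split; last exact: ltW.
- have u_col : u = col l A by rewrite /u (simplex_supp_card1 x_simplex l_supp) // mulmx_ebasis.
  have fw_le0 : gdot f u (col j A - u) <= 0.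
    rewrite /gdot linearB subr_le0 -/(gdot f u u) (congr1 (gdot f u) u_col).
    exact: j_min.
  by rewrite [in u - _]u_col subrr /gdot linear0; split; [exact: lexx | exact: fw_le0].
- by case/norP; rewrite -leNgt.
Qed.

Lemma Fr_sub_fstar_le_l1dist z : Zstar f A z ->
  Fr f u - fstar f A <= gdot f u (col l A - col j A) / 2 * l1dist x z.
Proof.
move=> [sz Fz]; have := gdot_le_Fr_sub x_simplex sz; rewrite -/u Fz => conv.
have gdot_xz : gdot f u (u - A *m z) = \sum_i (x i 0 - z i 0) * gdot f u (col i A).
  have -> : u - A *m z = A *m (x - z) by rewrite mulmxBr.
  by rewrite /gdot diff_mulmx; apply: eq_bigr => i _; rewrite !mxE.
have le_cl i : 0 < x i 0 -> gdot f u (col i A) <= gdot f u (col l A).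
  by move=> xi; apply: l_max; rewrite inE.
have := simplex_pairing_le_l1dist x_simplex sz j_min le_cl.
rewrite -gdot_xz /gdot !linearB /=; lra.
Qed.

Lemma Fr_sub_fstar_le_distZ (G : R) : Zstar f A !=set0 ->
  gdot f u (col l A - col j A) / 2 <= G -> Fr f u - fstar f A <= G * distZ f A x.
Proof.
move=> [z0 Zz0] slope_le.
have slope_ge0 : 0 <= gdot f u (col l A - col j A) / 2.
  by apply: divr_ge0; [rewrite /gdot linearB subr_ge0; exact: j_min | exact: ler0n].
apply: ler_mul_inf; first by exists (l1dist x z0), z0.
  exact: le_trans slope_le.
move=> _ [z Zz <-]; apply: le_trans (Fr_sub_fstar_le_l1dist Zz) _.
by apply: ler_wpM2r slope_le; apply: sumr_ge0 => i _.
Qed.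

End Iterate.
End ConvexOnHull.

Section ErrorBound.
Variables (R : realType) (m n : nat) (A : 'M[R]_(m, n)) (f : 'cV[R]_m -> \bar R).
Implicit Types (x : 'cV[R]_n).

Lemma mustar_le_quotient x : simplex x -> ~ Zstar f A x ->
  (mustar f A <= ((2 * (Fr f (A *m x) - fstar f A)) / distZ f A x ^+ 2)%:E)%E.
Proof. by move=> sx xZ; apply: ereal_inf_lbound; exists x. Qed.

(* with Z* empty, distZ is the infimum of the empty set, i.e. 0, and so is the quotient *)
Lemma Zstar_neq0 x : (0 < mustar f A)%E -> simplex x -> ~ Zstar f A x -> Zstar f A !=set0.
Proof.
move=> mu_gt0 sx xZ; apply/set0P/eqP => Z0.
have := lt_le_trans mu_gt0 (mustar_le_quotient sx xZ).
by rewrite /distZ Z0 image_set0 inf0 expr0n /= invr0 mulr0 ltxx.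
Qed.

Lemma distZ_ge0 x : Zstar f A !=set0 -> 0 <= distZ f A x.
Proof.
move=> [z Zz]; apply: lb_le_inf; first by exists (l1dist x z), z.
by move=> _ [z' _ <-]; apply: sumr_ge0 => i _.
Qed.

End ErrorBound.

Lemma mule_half_le_sqr (R : realType) (mu : \bar R) (D d G : R) :
  0 < D -> 0 < d -> D <= G * d -> (mu <= (2 * D / d ^+ 2)%:E)%E ->
  (mu * (2^-1 * D)%:E <= (G ^+ 2)%:E)%E.
Proof.
move=> D_gt0 d_gt0 D_le; case: mu => [r| |] //=; last first.
  by move=> _; rewrite gt0_mulNye ?lte_fin ?mulr_gt0 ?invr_gt0 ?ltr0n // leNye.
rewrite lee_fin -EFinM lee_fin => r_le.
apply: le_trans (ler_wpM2r _ r_le) _; first by rewrite mulr_ge0 ?invr_ge0 ?ltW.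
have -> : 2 * D / d ^+ 2 * (2^-1 * D) = (D / d) ^+ 2 by field; exact: lt0r_neq0.
have : D / d <= G by rewrite ler_pdivrMr // mulrC.
have : 0 <= D / d by rewrite divr_ge0 ?ltW.
nra.
Qed.

Theorem lemma3 (R : realType) (m n : nat) (A : 'M[R]_(m, n))
  (f : 'cV[R]_m -> \bar R)
  (Hcols : exists i j : 'I_n, col i A != col j A)
  (Hnoinf : no_minus_infty f)
  (Hconv : convex_ext f)
  (Hdiff : differentiable_ext f)
  (Hdom : convcols A `<=` dom f)
  (Hmu : (0 < mustar f A)%E)
  (x : nat -> 'cV[R]_n) (j l : nat -> 'I_n) (alpha : nat -> R)
  (Hrun : FW_away_run f A x j l alpha) :
  forall k : nat,
    let u := A *m x k in
    let g := gdot f u (fw_dir f A (x k) (j k) (l k)) in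
    (mustar f A * (2^-1 * (Fr f u - fstar f A))%:E <= (g ^+ 2)%:E)%E /\
    g <= fstar f A - Fr f u.
Proof.
move=> k u g.
have xs := FW_away_run_simplex Hrun k.
have [_ /(_ k) [j_min [l_supp [l_max _]]]] := Hrun.
have [g_fw g_away] := fw_dir_le xs j_min l_supp.
have gap := fstar_ge_FW_gap Hnoinf Hconv Hdiff Hdom xs j_min.
split; last by rewrite -/u in gap *; lra.
have := fstar_le_Fr Hnoinf Hconv Hdiff Hdom xs j_min.
rewrite -subr_ge0 le_eqVlt => /orP[/eqP <-|D_gt0].
  by rewrite mulr0 mule0 lee_fin sqr_ge0.
have xZ : ~ Zstar f A (x k) by move=> [_ Fx]; move: D_gt0; rewrite /u Fx subrr ltxx.
have Z_neq0 := Zstar_neq0 Hmu xs xZ.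
have slope_le : gdot f u (col (l k) A - col (j k) A) / 2 <= - g.
  by move: g_fw g_away; rewrite /gdot !linearB /=; lra.
have D_le : Fr f u - fstar f A <= - g * distZ f A (x k).
  exact: (Fr_sub_fstar_le_distZ Hnoinf Hconv Hdiff Hdom xs j_min l_max).
have d_gt0 : 0 < distZ f A (x k).
  rewrite lt_neqAle distZ_ge0 // andbT; apply/eqP => d0.
  by move: D_le; rewrite -d0 mulr0; lra.
rewrite -sqrrN; apply: mule_half_le_sqr D_gt0 d_gt0 D_le _.
exact: mustar_le_quotient.
Qed.
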